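(* Let $\mathcal{F}=\{f_1,\dots,f_n\}$ be a basis for $\mathbb{R}^n$ and $\mathcal{F}^*=\{f_1^*,\dots,f_n^*\}$ its dual basis. Then: (i) If $M$ is a $k$-dimensional PR-subspace with respect to $\mathcal{F}$, then $|\mathrm{supp}_{\mathcal{F}^*}(x)|\ge k$ for every nonzero $x\in M$; consequently $M$ is maximal if there exists $x\in M$ with $|\mathrm{supp}_{\mathcal{F}^*}(x)|=k$. (ii) For every positive integer $k\le[(n+1)/2]$ and every vector $x\in\mathbb{R}^n$ with $|\mathrm{supp}_{\mathcal{F}^*}(x)|=k$, there exists a $k$-dimensional maximal PR-subspace $M$ with respect to $\mathcal{F}$ such that $x\in M$. (iii) If $k<[(n+1)/2]$ and $M$ is a $k$-dimensional PR-subspace with respect to $\mathcal{F}$, then $M$ is maximal if and only if there exists $x\in M$ with $|\mathrm{supp}_{\mathcal{F}^*}(x)|=k$.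
   Context: The dual basis $\{f_i^*\}$ is the unique basis with $\langle f_i^*,f_j\rangle=\delta_{ij}$. For $x=\sum_{i=1}^n c_if_i^*$, $\mathrm{supp}_{\mathcal{F}^*}(x)=\{i:c_i\neq0\}$. $[a]$ is the integer part of $a$. A subspace $M$ is a PR-subspace with respect to $\mathcal{F}$ if $\{P_Mf_i\}_{i=1}^n$ (with $P_M$ the orthogonal projection onto $M$) spans $M$ and whenever $x,y\in M$ satisfy $|\langle x,P_Mf_i\rangle|=|\langle y,P_Mf_i\rangle|$ for all $i$, then $x=\pm y$; it is maximal if it is not a proper subspace of another PR-subspace with respect to $\mathcal{F}$. *)

(* Subspaces are row spaces of square matrices (mxalgebra). *)
From HB Require Import structures.
From mathcomp Require Import all_boot all_order all_algebra.
From mathcomp Require Import reals.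
Set Implicit Arguments. Unset Strict Implicit. Unset Printing Implicit Defensive.
Import Order.TTheory GRing.Theory Num.Theory.
Local Open Scope ring_scope.

Section PR.
Variables (R : realType) (n : nat).

Definition inner (x y : 'rV[R]_n) : R := \sum_(i < n) x 0 i * y 0 i.

(* matrix of the orthogonal projection onto the row space of M
   (acting on row vectors by right multiplication):
   P = B^T (B B^T)^{-1} B with B = row_base M (a row-free basis of M) *)
Definition oproj_mx (M : 'M[R]_n) : 'M[R]_n :=
  let B := row_base M in (B^T *m invmx (B *m B^T)) *m B.

Definition oproj (M : 'M[R]_n) (v : 'rV[R]_n) : 'rV[R]_n := v *m oproj_mx M.

Definition is_dual_basis (f g : 'M[R]_n) : Prop :=
  forall i j : 'I_n, inner (row i g) (row j f) = (i == j)%:R.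

(* coefficients c of x in the basis g : x = sum_i c_i g_i *)
Definition coords (g : 'M[R]_n) (x : 'rV[R]_n) : 'rV[R]_n := x *m invmx g.

Definition supp (g : 'M[R]_n) (x : 'rV[R]_n) : {set 'I_n} :=
  [set i | coords g x 0 i != 0].

Definition PR_subspace (f M : 'M[R]_n) : Prop :=
  (\sum_(i < n) <<oproj M (row i f)>> == M)%MS /\
  forall x y : 'rV[R]_n, (x <= M)%MS -> (y <= M)%MS ->
    (forall i : 'I_n, `|inner x (oproj M (row i f))| = `|inner y (oproj M (row i f))|) ->
    x = y \/ x = - y.

Definition maximal_PR (f M : 'M[R]_n) : Prop :=
  PR_subspace f M /\ forall M' : 'M[R]_n, PR_subspace f M' -> ~ (M < M')%MS.

End PR.

From HB Require Import structures.
From mathcomp Require Import all_boot all_order all_algebra.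
From mathcomp Require Import reals boolp.
From mathcomp Require Import lra zify.
Import Order.TTheory GRing.Theory Num.Theory.
Local Open Scope ring_scope.
Set Implicit Arguments. Unset Strict Implicit. Unset Printing Implicit Defensive.

(* Since f is a basis, the P_M f_i always span M, and for x in M the numbers
   <x, P_M f_i> = <x, f_i> are the F*-coordinates of x.  Comparing x, y with
   a = x - y and b = x + y shows that M is a PR-subspace iff no two nonzero
   vectors of M have disjoint F*-supports.  Then (i) holds because a subspace
   of dimension > |supp x| contains a nonzero vector whose coordinates vanish
   on supp x.
   For (ii) and (iii), M is enlarged by a generic vector v avoiding the
   finitely many proper subspaces M + span {f_i^* | i in S}, |S| <= r, so that
   every vector of M + Rv outside M has support larger than r.  In (ii) one
   grows span {x} in this way while keeping, for a fixed B containing supp x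
   with |B| = 2k - 1, at least k support points of every nonzero vector in B;
   two such supports always meet.  In (iii), if no vector of M had support of
   size exactly k, the enlarged space would still be a PR-subspace. *)

Lemma exists_notin (R : numDomainType) (s : seq R) : exists t, t \notin s.
Proof.
pose s' : seq R := [seq i%:R | i <- iota 0 (size s).+1].
have : ~~ all (mem s) s'.
  apply: contraL (ltnSn (size s)) => /allP s's; rewrite -leqNgt.
  have uniq_s' : uniq s'.
    by rewrite map_inj_uniq ?iota_uniq // => i j /eqP; rewrite eqr_nat => /eqP.
  by rewrite -[X in (X <= _)%N](size_iota 0) -(size_map (fun i => i%:R : R)) uniq_leq_size.
by case/allPn => t _ t_s; exists t.
Qed.

Section Avoidance.
Variables (R : numFieldType) (n : nat).
Implicit Types (U : 'M[R]_n) (v w : 'rV[R]_n).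

Lemma line_sub_twice U v w (s t : R) : s != t ->
  ((v + s *: w)%R <= U)%MS -> ((v + t *: w)%R <= U)%MS -> (v <= U)%MS && (w <= U)%MS.
Proof.
move=> st sU tU.
have wU : (w <= U)%MS.
  have -> : w = (s - t)^-1 *: ((v + s *: w) - (v + t *: w)).
    by rewrite opprD addrACA subrr add0r -scalerBl scalerA mulVf ?scale1r ?subr_eq0.
  by apply: scalemx_sub; apply: addmx_sub; rewrite ?eqmx_opp.
have -> : v = (v + s *: w) - s *: w by rewrite addrK.
by rewrite wU andbT; apply: addmx_sub; rewrite ?eqmx_opp ?scalemx_sub.
Qed.

Lemma line_avoids (Us : seq 'M[R]_n) v w :
  (forall U, U \in Us -> ~~ ((v <= U)%MS && (w <= U)%MS)) ->
  exists t, forall U, U \in Us -> ~~ ((v + t *: w)%R <= U)%MS.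
Proof.
move=> vwUs.
suff [ts tsP] : exists ts : seq R,
    forall t, t \notin ts -> forall U, U \in Us -> ~~ ((v + t *: w)%R <= U)%MS.
  by have [t t_ts] := exists_notin ts; exists t; apply: tsP.
elim: Us vwUs => [|U Us IH] vwUs; first by exists [::] => t _ U; rewrite in_nil.
have [ts tsP] := IH (fun U' U'Us => vwUs U' (mem_behead (s := U :: Us) U'Us)).
have [[s sU] | noU] := pselect (exists s, ((v + s *: w)%R <= U)%MS); last first.
  exists ts => t t_ts U'; rewrite inE => /predU1P [->|]; last exact: tsP.
  by apply/negP => tU; apply: noU; exists t.
exists (s :: ts) => t; rewrite inE negb_or => /andP [ts_neq t_ts] U'.
rewrite inE => /predU1P [->|]; last exact: tsP.
apply/negP => tU; move: (vwUs U (mem_head _ _)).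
by rewrite (line_sub_twice ts_neq tU sU).
Qed.

Lemma exists_rV_avoiding (Us : seq 'M[R]_n) :
  (forall U, U \in Us -> (\rank U < n)%N) ->
  exists v : 'rV[R]_n, forall U, U \in Us -> ~~ (v <= U)%MS.
Proof.
elim: Us => [|U Us IH] Us_proper; first by exists 0.
have [v vUs] : exists v : 'rV[R]_n, forall U, U \in Us -> ~~ (v <= U)%MS.
  by apply: IH => U' U'Us; apply: Us_proper; rewrite inE U'Us orbT.
have /row_subPn [i iU] : ~~ (1%:M <= U)%MS.
  by rewrite sub1mx /row_full ltn_eqF ?Us_proper ?mem_head.
have [t tP] : exists t, forall U', U' \in U :: Us -> ~~ ((v + t *: row i 1%:M)%R <= U')%MS.
  apply: line_avoids => U'.
  by rewrite inE => /predU1P [->|/vUs /negbTE ->]; rewrite ?(negbTE iU) ?andbF.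
by exists (v + t *: row i 1%:M).
Qed.

End Avoidance.

Lemma rank_adds_notin (F : fieldType) n (M : 'M[F]_n) (v : 'rV[F]_n) :
  ~~ (v <= M)%MS -> \rank (M + <<v>>)%MS = (\rank M).+1.
Proof.
move=> vM; apply/eqP; rewrite eqn_leq.
have : (M < M + <<v>>)%MS.
  rewrite ltmxE addsmxSl; apply: contra vM => MvM; apply: submx_trans MvM.
  by apply: submx_trans (addsmxSr M _); rewrite genmxE.
rewrite ltmxErank => /andP [_ ->]; rewrite andbT.
apply: leq_trans (leq_of_leqif (mxrank_adds_leqif M <<v>>%MS)) _.
by rewrite genmxE rank_rV -[X in (_ <= X)%N]addn1 leq_add2l leq_b1.
Qed.

Lemma mulmx_tr_self_eq0 (R : realFieldType) m (v : 'rV[R]_m) :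
  (v *m v^T == 0) = (v == 0).
Proof.
apply/eqP/eqP => [vv0 | ->]; last by rewrite mul0mx.
have : \sum_j v 0 j ^+ 2 = 0.
  move/matrixP/(_ 0 0): vv0; rewrite !mxE => {2}<-.
  by apply: eq_bigr => j _; rewrite mxE expr2.
move/psumr_eq0P => v2_0; apply/rowP => j; apply/eqP.
by rewrite mxE -sqrf_eq0 v2_0 // => i _; apply: sqr_ge0.
Qed.

Lemma row_free_gram_unit (R : realFieldType) m n (B : 'M[R]_(m, n)) :
  row_free B -> B *m B^T \in unitmx.
Proof.
move=> freeB; rewrite -row_free_unit -kermx_eq0 -submx0; apply/rV_subP => u.
rewrite sub_kermx submx0 mulmxA => /eqP uBBt0.
by rewrite -(mulmx_free_eq0 _ freeB) -mulmx_tr_self_eq0 trmx_mul mulmxA uBBt0 mul0mx.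
Qed.

Lemma innerE (R : realType) n (x y : 'rV[R]_n) : inner x y = (x *m y^T) 0 0.
Proof. by rewrite mxE; apply: eq_bigr => i _; rewrite mxE. Qed.

Section Projection.
Variables (R : realType) (n : nat) (M : 'M[R]_n).
Implicit Types (y v : 'rV[R]_n).

Lemma oproj_mx_id y : (y <= M)%MS -> y *m oproj_mx M = y.
Proof.
rewrite -(eq_row_base M) => /submxP [u ->]; rewrite /oproj_mx.
move: (row_base M) (row_base_free M) => B /row_free_gram_unit gram_unit.
by rewrite !mulmxA -(mulmxA u B) mulmxK.
Qed.

Lemma oproj_mx_tr : (oproj_mx M)^T = oproj_mx M.
Proof.
rewrite /oproj_mx; move: (row_base M) => B.
by rewrite !trmx_mul trmx_inv trmx_mul trmxK mulmxA.
Qed.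

Lemma oproj_sub v : (oproj M v <= M)%MS.
Proof. by rewrite /oproj /oproj_mx mulmxA (submx_trans (submxMl _ _)) ?eq_row_base. Qed.

Lemma inner_oproj y v : (y <= M)%MS -> inner y (oproj M v) = inner y v.
Proof. by move=> yM; rewrite !innerE trmx_mul oproj_mx_tr mulmxA oproj_mx_id. Qed.

End Projection.

Lemma exists_supset_card (T : finType) (A : {set T}) m :
  (#|A| <= m <= #|T|)%N -> exists2 B : {set T}, A \subset B & #|B| = m.
Proof.
elim: m => [|m IH] /andP [Am mT]; first by exists A; last by apply/eqP; rewrite -leqn0.
have [Am1 | Am1] := eqVneq #|A| m.+1; first by exists A.
have [B AB cardB] : exists2 B : {set T}, A \subset B & #|B| = m by apply: IH; lia.
have /set0Pn [i iB] : ~: B != set0 by rewrite -card_gt0; have := cardsC B; lia.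
exists (i |: B); first by rewrite (subset_trans AB) ?subsetUr.
by rewrite cardsU1 -in_setC iB cardB.
Qed.

Section Coordinates.
Variables (R : realType) (n : nat) (g : 'M[R]_n).
Implicit Types (M : 'M[R]_n) (x y : 'rV[R]_n) (S B : {set 'I_n}).

Lemma coordsD x y i : coords g (x + y) 0 i = coords g x 0 i + coords g y 0 i.
Proof. by rewrite /coords mulmxDl mxE. Qed.

Lemma coordsN x i : coords g (- x) 0 i = - coords g x 0 i.
Proof. by rewrite /coords mulNmx mxE. Qed.

Lemma coordsB x y i : coords g (x - y) 0 i = coords g x 0 i - coords g y 0 i.
Proof. by rewrite coordsD coordsN. Qed.

Lemma supp0 : supp g 0 = set0.
Proof. by apply/setP => i; rewrite !inE /coords mul0mx mxE eqxx. Qed.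

Lemma suppZ (t : R) x : t != 0 -> supp g (t *: x) = supp g x.
Proof.
by move=> t0; apply/setP => i; rewrite !inE /coords -scalemxAl mxE mulf_eq0 negb_or t0.
Qed.

Lemma disjoint_suppP x y :
  reflect (forall i, coords g x 0 i = 0 \/ coords g y 0 i = 0)
          [disjoint supp g x & supp g y].
Proof.
rewrite disjoints_subset; apply: (iffP subsetP) => [xy i | xy i].
  by have := xy i; rewrite !inE negbK; case: eqP => [|_ /(_ isT) /eqP]; [left | right].
by rewrite !inE negbK; case: (xy i) => ->; rewrite eqxx.
Qed.

Lemma card_supp_disjoint x y :
  [disjoint supp g x & supp g y] -> (#|supp g x| + #|supp g y| <= n)%N.
Proof.
move=> xy; have := (leq_card_setU (supp g x) (supp g y)).2; rewrite xy => /eqP <-.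
by rewrite -[X in (_ <= X)%N]card_ord max_card.
Qed.

Lemma exists_disjoint_supp M S : (#|S| < \rank M)%N ->
  exists2 y, (y <= M)%MS & (y != 0) && [disjoint supp g y & S].
Proof.
move=> ltSM; pose base := row_base M.
pose C := base *m invmx g *m colsub (enum_val : 'I_#|S| -> 'I_n) 1%:M.
pose u := nz_row (kermx C).
have u0 : u != 0.
  rewrite nz_row_eq0 -mxrank_eq0 mxrank_ker subn_eq0 -ltnNge.
  exact: leq_ltn_trans (rank_leq_col C) ltSM.
have /eqP uC0 : (u *m C == 0) by rewrite -sub_kermx nz_row_sub.
exists (u *m base); first by apply: submx_trans (submxMl _ _) _; rewrite eq_row_base.
rewrite mulmx_free_eq0 ?row_base_free // u0 /= disjoint_sym disjoints_subset.
apply/subsetP => i iS; rewrite !inE negbK.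
move/matrixP/(_ 0 (enum_rank_in iS i)): uC0.
by rewrite /C !mulmxA mulmx_colsub mulmx1 !mxE enum_rankK_in // => ->.
Qed.

Definition complement_property M :=
  forall a b : 'rV[R]_n, (a <= M)%MS -> (b <= M)%MS ->
    [disjoint supp g a & supp g b] -> a = 0 \/ b = 0.

Lemma rank_le_card_supp M x : complement_property M -> (x <= M)%MS -> x != 0 ->
  (\rank M <= #|supp g x|)%N.
Proof.
move=> cpM xM x0; rewrite leqNgt; apply/negP.
case/exists_disjoint_supp => y yM /andP [y0 yx].
have [x_0 | y_0] : x = 0 \/ y = 0 by apply: cpM; rewrite // disjoint_sym.
- by rewrite x_0 eqxx in x0.
- by rewrite y_0 eqxx in y0.
Qed.

Definition supp_heavy_on B k M :=
  forall y, (y <= M)%MS -> y != 0 -> (k <= #|B :&: supp g y|)%N.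

Lemma complement_property_heavy B k M : (#|B| < k.*2)%N -> supp_heavy_on B k M ->
  complement_property M.
Proof.
move=> Bk heavyM a b aM bM ab.
have [-> | a0] := eqVneq a 0; first by left.
have [-> | b0] := eqVneq b 0; first by right.
have : B :&: supp g b \subset B :\: supp g a.
  by rewrite subsetD subsetIl (disjointWl (subsetIr _ _)) // disjoint_sym.
move/subset_leq_card; rewrite cardsD.
by have := heavyM _ aM a0; have := heavyM _ bM b0; lia.
Qed.

Definition coord_span S := (\sum_(i in S) <<row i g>>)%MS.

Lemma rank_coord_span S : (\rank (coord_span S) <= #|S|)%N.
Proof.
apply: leq_trans (leq_of_leqif (mxrank_sum_leqif _)) _.
rewrite -sum1_card leq_sum // => i _.
by rewrite /= genmxE rank_leq_row.
Qed.

Hypothesis g_unit : g \in unitmx.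

Lemma sub_coord_span x S : supp g x \subset S -> (x <= coord_span S)%MS.
Proof.
move=> /subsetP xS; rewrite -[x](mulmxKV g_unit) (mulmx_sum_row (coords g x)).
apply: summx_sub => i _; have [iS | iS] := boolP (i \in S).
  by rewrite scalemx_sub // (sumsmx_sup i) ?genmxE.
have : i \notin supp g x by apply: contra iS; apply: xS.
by rewrite inE negbK => /eqP ->; rewrite scale0r sub0mx.
Qed.

Lemma generic_extension M r : (\rank M + r < n)%N ->
  exists v : 'rV[R]_n, ~~ (v <= M)%MS /\
    forall y, (y <= M + <<v>>)%MS -> (#|supp g y| <= r)%N -> (y <= M)%MS.
Proof.
move=> ltMr.
pose Us := [seq (M + coord_span X)%MS | X <- enum [set X : {set 'I_n} | (#|X| <= r)%N]].
have [v vUs] : exists v : 'rV[R]_n, forall U, U \in Us -> ~~ (v <= U)%MS.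
  apply: exists_rV_avoiding => U /mapP [X]; rewrite mem_enum inE => Xr ->.
  apply: leq_ltn_trans (leq_of_leqif (mxrank_adds_leqif _ _)) _.
  by apply: leq_ltn_trans ltMr; rewrite leq_add2l (leq_trans (rank_coord_span X)).
have vMS S : (#|S| <= r)%N -> ~~ (v <= M + coord_span S)%MS.
  by move=> Sr; apply: vUs; apply: map_f; rewrite mem_enum inE.
exists v; split.
  by apply: contra (vMS set0 _) => [vM|]; rewrite ?cards0 ?(submx_trans vM) ?addsmxSl.
move=> y /sub_addsmxP [[u w] /= yE] suppr.
have /sub_rVP [t wE] : (w *m <<v>> <= v)%MS by rewrite (submx_trans (submxMl _ _)) ?genmxE.
have [t0 | t0] := eqVneq t 0; first by rewrite yE wE t0 scale0r addr0 submxMl.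
exfalso; move/negP: (vMS _ suppr); apply.
have -> : v = t^-1 *: (y - u *m M) by rewrite yE wE addrC addKr scalerA mulVf ?scale1r.
apply: scalemx_sub; apply: addmx_sub.
  by rewrite (submx_trans (sub_coord_span (subxx _))) ?addsmxSr.
by rewrite eqmx_opp (submx_trans (submxMl _ _)) ?addsmxSl.
Qed.

Lemma complement_property_extend M : complement_property M -> ((\rank M).*2 < n)%N ->
  (forall y, (y <= M)%MS -> y != 0 -> (\rank M < #|supp g y|)%N) ->
  exists M', complement_property M' /\ (M < M')%MS.
Proof.
move=> cpM rankM suppM.
have [|v [vM vP]] := @generic_extension M (n - (\rank M).+1); first lia.
exists (M + <<v>>)%MS; split; last first.
  rewrite ltmxE addsmxSl; apply: contra vM => /(submx_trans _); apply.
  by apply: submx_trans (addsmxSr M _); rewrite genmxE.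
move=> a b aMv bMv ab.
have [-> | a0] := eqVneq a 0; first by left.
have [-> | b0] := eqVneq b 0; first by right.
have outside z : (z <= M + <<v>>)%MS -> ~~ (z <= M)%MS -> (n - \rank M <= #|supp g z|)%N.
  by move=> zMv; apply: contraR; rewrite -ltnNge => small; apply: vP => //; lia.
have := card_supp_disjoint ab.
have [aM | aM] := boolP (a <= M)%MS; have [bM | bM] := boolP (b <= M)%MS.
- by move=> _; apply: cpM.
- by have := suppM _ aM a0; have := outside _ bMv bM; lia.
- by have := outside _ aMv aM; have := suppM _ bM b0; lia.
- by have := outside _ aMv aM; have := outside _ bMv bM; lia.
Qed.

Lemma exists_complement_subspace x k : (0 < k)%N -> (k.*2 <= n.+1)%N ->
  #|supp g x| = k -> exists M, [/\ \rank M = k, (x <= M)%MS & complement_property M].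
Proof.
move=> k0 kn suppx.
have x0 : x != 0 by apply: contraTneq k0 => x0; rewrite -suppx x0 supp0 cards0.
have [B xB cardB] : exists2 B : {set 'I_n}, supp g x \subset B & #|B| = k.*2.-1.
  by apply: exists_supset_card; rewrite card_ord suppx; lia.
suff [M [rankM xM heavyM]] :
    exists M, [/\ \rank M = k, (x <= M)%MS & supp_heavy_on B k M].
  by exists M; split => //; apply: complement_property_heavy heavyM; lia.
have grow j : (0 < j <= k)%N ->
    exists M, [/\ \rank M = j, (x <= M)%MS & supp_heavy_on B k M].
  elim: j => [//|[|j] IH] /andP [_ jk].
    exists <<x>>%MS; split; [by rewrite genmxE rank_rV x0 | by rewrite genmxE |].
    move=> y; rewrite genmxE => /sub_rVP [t ->].
    rewrite scaler_eq0 negb_or => /andP [t0 _].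
    by rewrite suppZ // (setIidPr xB) suppx.
  have [M [rankM xM heavyM]] := IH (ltnW jk).
  have [|v [vM vP]] := @generic_extension M (n - k); first lia.
  exists (M + <<v>>)%MS; split; first by rewrite rank_adds_notin ?rankM.
    by rewrite (submx_trans xM) ?addsmxSl.
  move=> y yMv y0; have [yM | yM] := boolP (y <= M)%MS; first exact: heavyM.
  have : (n - k < #|supp g y|)%N by rewrite ltnNge; apply: contra yM; apply: vP.
  have : (#|B :\: supp g y| <= #|~: supp g y|)%N.
    by apply: subset_leq_card; rewrite setDE subsetIr.
  by have := cardsID (supp g y) B; have := cardsC (supp g y); rewrite card_ord; lia.
by apply: grow; rewrite k0 leqnn.
Qed.

End Coordinates.

Section Frame.
Variables (R : realType) (n : nat) (f fs : 'M[R]_n).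
Hypotheses (f_free : row_free f) (fs_dual : is_dual_basis f fs).

Lemma dual_basis_mul_tr : fs *m f^T = 1%:M.
Proof.
apply/matrixP => i j; rewrite !mxE -fs_dual /inner.
by apply: eq_bigr => l _; rewrite !mxE.
Qed.

Lemma dual_basis_unit : fs \in unitmx.
Proof. exact: (mulmx1_unit dual_basis_mul_tr).1. Qed.

Lemma coords_dual x i : coords fs x 0 i = inner x (row i f).
Proof.
rewrite /coords -[invmx fs]mulmx1 -dual_basis_mul_tr mulKmx ?dual_basis_unit //.
by rewrite innerE !mxE; apply: eq_bigr => l _; rewrite !mxE.
Qed.

Lemma oproj_frame_span M : (\sum_i <<oproj M (row i f)>> == M)%MS.
Proof.
apply/andP; split; first by apply/sumsmx_subP => i _; rewrite genmxE oproj_sub.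
apply/rV_subP => y yM.
have /submxP [u yE] : (y <= f)%MS by rewrite submx_full // row_full_unit -row_free_unit.
rewrite -(oproj_mx_id yM) yE (mulmx_sum_row u f) mulmx_suml.
apply: summx_sub => i _; rewrite -scalemxAl scalemx_sub //.
by rewrite (sumsmx_sup i) ?genmxE.
Qed.

Lemma PR_subspaceP M : PR_subspace f M <-> complement_property fs M.
Proof.
have coordsE x i : (x <= M)%MS -> inner x (oproj M (row i f)) = coords fs x 0 i.
  by move=> xM; rewrite inner_oproj // coords_dual.
split=> [[_ PRM] a b aM bM /disjoint_suppP ab | cpM].
  have apbM : ((a + b)%R <= M)%MS by apply: addmx_sub.
  have ambM : ((a - b)%R <= M)%MS by apply: addmx_sub; rewrite ?eqmx_opp.
  case: (PRM _ _ apbM ambM) => [i | /matrixP abE | /matrixP abE].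
  - rewrite !coordsE // coordsD coordsB.
    by case: (ab i) => ->; rewrite ?addr0 ?subr0 ?add0r ?sub0r ?normrN.
  - by right; apply/matrixP => i j; move: (abE i j); rewrite !mxE; lra.
  - by left; apply/matrixP => i j; move: (abE i j); rewrite !mxE; lra.
split; first exact: oproj_frame_span.
move=> x y xM yM xy.
have xmyM : ((x - y)%R <= M)%MS by apply: addmx_sub; rewrite ?eqmx_opp.
have xpyM : ((x + y)%R <= M)%MS by apply: addmx_sub.
case: (cpM _ _ xmyM xpyM) => [|/eqP|/eqP]; last 2 first.
- by rewrite subr_eq0 => /eqP; left.
- by rewrite addr_eq0 => /eqP; right.
apply/disjoint_suppP => i; move: (xy i); rewrite !coordsE // coordsB coordsD.
by move/eqP; rewrite eqr_norm2 => /orP [] /eqP ->; rewrite ?subrr ?addNr; [left | right].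
Qed.

Lemma maximal_PR_of_card_supp M x : PR_subspace f M -> (x <= M)%MS ->
  (0 < \rank M)%N -> #|supp fs x| = \rank M -> maximal_PR f M.
Proof.
move=> PRM xM rankM0 suppx; split=> // M' /PR_subspaceP cpM' ltMM'.
have x0 : x != 0 by apply: contraTneq rankM0 => x0; rewrite -suppx x0 supp0 cards0.
have := rank_le_card_supp cpM' (submx_trans xM (ltmxW ltMM')) x0.
by move: ltMM'; rewrite ltmxErank suppx => /andP [_]; lia.
Qed.

End Frame.

Unset Implicit Arguments.

Theorem theorem4p9 (R : realType) (n : nat) (f fs : 'M[R]_n)
  (hf : row_free f) (hfs : is_dual_basis f fs) :
  (* (i) *)
  (forall (k : nat) (M : 'M[R]_n), (0 < k)%N -> \rank M = k -> PR_subspace f M ->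
     (forall x : 'rV[R]_n, (x <= M)%MS -> x != 0 -> (k <= #|supp fs x|)%N) /\
     ((exists2 x : 'rV[R]_n, (x <= M)%MS & #|supp fs x| = k) -> maximal_PR f M)) /\
  (* (ii) *)
  (forall (k : nat), (0 < k)%N -> (k <= (n + 1)./2)%N ->
     forall x : 'rV[R]_n, #|supp fs x| = k ->
     exists M : 'M[R]_n, [/\ \rank M = k, maximal_PR f M & (x <= M)%MS]) /\
  (* (iii) *)
  (forall (k : nat) (M : 'M[R]_n), (0 < k)%N -> (k < (n + 1)./2)%N ->
     \rank M = k -> PR_subspace f M ->
     (maximal_PR f M <-> exists2 x : 'rV[R]_n, (x <= M)%MS & #|supp fs x| = k)).
Proof.
have fs_unit := dual_basis_unit hfs.
have part_i k M : (0 < k)%N -> \rank M = k -> PR_subspace f M ->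
    (forall x, (x <= M)%MS -> x != 0 -> (k <= #|supp fs x|)%N) /\
    ((exists2 x, (x <= M)%MS & #|supp fs x| = k) -> maximal_PR f M).
  move=> k0 rankM PRM; subst k; split=> [x | [x xM suppx]].
    by apply: rank_le_card_supp; apply/(PR_subspaceP hf hfs).
  exact: (maximal_PR_of_card_supp hf hfs PRM xM k0 suppx).
split; first exact: part_i.
split=> [k k0 kn x suppx | k M k0 kn rankM PRM].
  have [|M [rankM xM /(PR_subspaceP hf hfs) PRM]] :=
    exists_complement_subspace fs_unit k0 _ suppx; first lia.
  by exists M; split=> //; apply: (part_i k M k0 rankM PRM).2; exists x.
have [large_supp maximalM] := part_i k M k0 rankM PRM.
split=> // - [/(PR_subspaceP hf hfs) cpM maxM].
apply: contrapT => no_x.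
have [||M' [/(PR_subspaceP hf hfs) PRM' ltMM']] :=
  complement_property_extend fs_unit cpM; first lia.
- move=> y yM y0; rewrite rankM ltn_neqAle large_supp // andbT.
  by apply/eqP => suppy; apply: no_x; exists y.
- exact: maxM PRM' ltMM'.
Qed.
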